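(* Let $T$ be a $P$-Petri net, let $\rho$ be a $P$-configuration, let $Q\subseteq P$ be such that $\rho|_Q$ is $T|_Q$-bottom, let $s$ be the cardinality of the $T|_Q$-component of $\rho|_Q$, and let $d=|P\setminus Q|$. There exist a word $\sigma\in T^*$ with $|\sigma|\leq(1+d(1+s\|T\|_\infty+\|\rho\|_\infty)^{d^d})s$ and a $P$-configuration $\rho'$ with $\rho\xrightarrow{\sigma}\rho'$ such that either (1) $\rho'|_Q=\rho|_Q$ and $\rho'(p)>\rho(p)$ for every $p\in P\setminus Q$, or (2) there exists a set $Q'\subseteq P$ strictly containing $Q$ such that $\rho'|_{Q'}$ is $T|_{Q'}$-bottom and the cardinality $s'$ of the $T|_{Q'}$-component of $\rho'|_{Q'}$ satisfies $s'\leq(1+d(1+s\|T\|_\infty+\|\rho\|_\infty)^{d^d})s$.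
   Context: A $P$-configuration is a map in $\mathbb{N}^P$, $\|\rho\|_\infty=\max_p\rho(p)$. For a finite set $Q$, $\rho|_Q$ is the $Q$-configuration with $\rho|_Q(q)=\rho(q)$ if $q\in P$ and $0$ otherwise. A $P$-Petri net $T$ is a finite set of transitions $t=(\alpha_t,\beta_t)$ (pairs of $P$-configurations); $\alpha\xrightarrow{t}\beta$ iff $\alpha=\alpha_t+\gamma$, $\beta=\beta_t+\gamma$ for some configuration $\gamma$; for a word $\sigma=t_1\cdots t_k$ ($|\sigma|=k$), $\xrightarrow{\sigma}$ is the composition; $\alpha\xrightarrow{T^*}\beta$ iff $\alpha\xrightarrow{\sigma}\beta$ for some $\sigma\in T^*$. $\|T\|_\infty$ is the maximum entry among all $\alpha_t,\beta_t$, $t\in T$. $t|_Q=(\alpha_t|_Q,\beta_t|_Q)$ and $T|_Q=\{t|_Q\mid t\in T\}$. The $T$-component of $\rho$ is the set of $\beta$ with $\rho\xrightarrow{T^*}\beta\xrightarrow{T^*}\rho$; $\rho$ is $T$-bottom if its $T$-component is finite and every $\beta$ with $\rho\xrightarrow{T^*}\beta$ satisfies $\beta\xrightarrow{T^*}\rho$. *)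

From mathcomp Require Import all_boot.
Set Implicit Arguments. Unset Strict Implicit. Unset Printing Implicit Defensive.

Section PetriDefs.
Variable P : finType.

Definition conf := {ffun P -> nat}.
Definition trans := (conf * conf)%type.
Definition net := seq trans.

Definition cnorm (r : conf) : nat := \max_(p : P) r p.
Definition tnorm (T : net) : nat :=
  \max_(t <- T) maxn (cnorm t.1) (cnorm t.2).

Definition step (t : trans) (a b : conf) : Prop :=
  exists g : conf, a = [ffun p => t.1 p + g p] /\ b = [ffun p => t.2 p + g p].

Fixpoint run (s : seq trans) (a b : conf) : Prop :=
  match s with
  | [::] => a = b
  | t :: s' => exists c, step t a c /\ run s' c b
  end.

Definition word_in (T : net) (s : seq trans) : bool := all (fun t => t \in T) s.

Definition reach (T : net) (a b : conf) : Prop :=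
  exists s, word_in T s /\ run s a b.

Definition in_component (T : net) (r b : conf) : Prop := reach T r b /\ reach T b r.

Definition component_card (T : net) (r : conf) (n : nat) : Prop :=
  exists l : seq conf, uniq l /\ size l = n /\
    (forall b, b \in l <-> in_component T r b).

Definition component_finite (T : net) (r : conf) : Prop :=
  exists n, component_card T r n.

Definition bottom (T : net) (r : conf) : Prop :=
  component_finite T r /\ (forall b, reach T r b -> reach T b r).

(* restriction of a configuration / net to Q, realised as P-configurations
   that vanish outside Q *)
Definition restr (Q : {set P}) (r : conf) : conf :=
  [ffun p => if p \in Q then r p else 0].
Definition restrT (Q : {set P}) (T : net) : net :=
  [seq (restr Q t.1, restr Q t.2) | t <- T].

End PetriDefs.

From mathcomp Require Import all_boot zify boolp.
Set Implicit Arguments. Unset Strict Implicit. Unset Printing Implicit Defensive.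

(* Rackoff-style induction on k = |W \ Q|, running the net restricted to a set W
   of places containing Q.  Put X = 1 + s |T| + |rho| and h = X ^ ((k+1) ^ k).
   If every configuration reachable in W keeps all places of W \ Q below h, there
   are at most s h^(k+1) of them, so a bottom configuration is reached by a short
   run and W itself is the larger bottom set.  Otherwise, cutting the loops out of
   the first run that leaves this box gives a short run after which some place p
   holds h tokens; the run given by induction for W \ {p} is too short to drain p
   below X, so it lifts to W.  For W = P, either a larger bottom set is reached or
   every place outside Q holds X tokens, and a run of length < s back to rho|Q
   inside the component costs at most s |T| tokens on each of them. *)

Lemma count_sub_lt (T : eqType) (a1 a2 : pred T) (s : seq T) x :
  subpred a1 a2 -> x \in s -> a2 x -> ~~ a1 x -> count a1 s < count a2 s.
Proof.
move=> sub12; elim: s => //= y s IH; rewrite inE => /orP [/eqP <- a2x /negbTE a1x|xs a2x a1x].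
  by rewrite a2x a1x ltnS; apply: sub_count.
have le_y : a1 y <= a2 y by case a1y: (a1 y); rewrite // sub12.
by rewrite -addnS leq_add // IH.
Qed.

Lemma expn_bernoulli x k : 0 < x -> 1 + k * (x - 1) <= x ^ k.
Proof.
move=> x_gt0; elim: k => [|k IH]; first by rewrite expn0.
have : x * (1 + k * (x - 1)) <= x * x ^ k by rewrite leq_mul2l IH orbT.
by rewrite expnS; move: (x ^ k) => y; nia.
Qed.

Lemma expn_add_le_succ a n : 0 < a -> a ^ n + n <= a.+1 ^ n.
Proof.
move=> a_gt0; elim: n => [|n IH]; first by rewrite !expn0.
have : a.+1 * (a ^ n + n) <= a.+1 * a.+1 ^ n by rewrite leq_mul2l IH.
have : 0 < a ^ n by rewrite expn_gt0 a_gt0.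
by rewrite !expnS; move: (a ^ n) (a.+1 ^ n) => y z; nia.
Qed.

Lemma expn_self_mono k : k ^ k <= k.+1 ^ k.+1.
Proof.
case: k => // k; apply: (@leq_trans (k.+2 ^ k.+1)); first by rewrite leq_exp2r.
by rewrite leq_pexp2l.
Qed.

Lemma rackoff_growth x y k : 1 + y <= x -> x + k * y * x ^ (k ^ k) <= x ^ (k.+1 ^ k).
Proof.
move=> le_yx; have x_gt0 : 0 < x by lia.
have le_xz : x <= x ^ (k ^ k).
  by rewrite -{1}(expn1 x) leq_pexp2l // expn_gt0; case: (k).
have le_exp : k ^ k + k <= k.+1 ^ k by case: (k) => // n; apply: expn_add_le_succ.
apply: leq_trans (leq_pexp2l x_gt0 le_exp); rewrite expnD.
apply: leq_trans (leq_mul (leqnn _) (expn_bernoulli k x_gt0)).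
move: (x ^ (k ^ k)) le_xz => z le_xz.
have : k * y * z <= k * (x - 1) * z by rewrite leq_mul2r leq_mul2l; lia.
nia.
Qed.

Lemma rackoff_bound_step x s k : 0 < x ->
  s * x ^ (k.+1 ^ k.+1) + k * s * x ^ (k ^ k) <= k.+1 * s * x ^ (k.+1 ^ k.+1).
Proof.
move=> x_gt0; rewrite [k.+1 * s]mulSn mulnDl -!mulnA leq_add2l !leq_mul2l.
by rewrite leq_pexp2l ?expn_self_mono ?orbT.
Qed.

Section Firing.
Variable P : finType.
Implicit Types (t : trans P) (a b c : conf P) (sg : seq (trans P)) (N : net P).

Definition enabled t a := [forall p, t.1 p <= a p].
Definition fire t a : conf P := [ffun p => a p - t.1 p + t.2 p].

Fixpoint fireable sg a : bool :=
  if sg is t :: sg' then enabled t a && fireable sg' (fire t a) else true.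
Definition fire_seq sg a : conf P := foldl (fun c t => fire t c) a sg.

Lemma stepE t a b : step t a b <-> enabled t a /\ b = fire t a.
Proof.
split=> [[g [-> ->]]|[/forallP en_a ->]].
- split; first by apply/forallP => p; rewrite ffunE leq_addr.
  by apply/ffunP => p; rewrite !ffunE; lia.
- exists [ffun p => a p - t.1 p].
  by split; apply/ffunP => p; rewrite !ffunE; have := en_a p; lia.
Qed.

Lemma step_det t a b b' : step t a b -> step t a b' -> b = b'.
Proof. by move=> /stepE [_ ->] /stepE [_ ->]. Qed.

Lemma runE sg a b : run sg a b <-> fireable sg a /\ fire_seq sg a = b.
Proof.
elim: sg a => [|t sg IH] a /=; first by split=> [->|[]].
split=> [[c [/stepE [-> ->] /IH]] //|[/andP [en_a ok_sg] fire_b]].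
by exists (fire t a); rewrite stepE IH.
Qed.

Lemma run_det sg a b b' : run sg a b -> run sg a b' -> b = b'.
Proof. by move=> /runE [_ <-] /runE [_ <-]. Qed.

Lemma run_cat sg1 sg2 a c :
  run (sg1 ++ sg2) a c <-> exists b, run sg1 a b /\ run sg2 b c.
Proof.
elim: sg1 a => [|t sg1 IH] a /=; first by split=> [|[b [-> //]]]; exists a.
split=> [[b [ab /IH [d [bd dc]]]]|[d [[b [ab bd]] dc]]].
  by exists d; split=> //; exists b.
by exists b; split=> //; apply/IH; exists d.
Qed.

Lemma fire_seq_cat sg1 sg2 a :
  fire_seq (sg1 ++ sg2) a = fire_seq sg2 (fire_seq sg1 a).
Proof. exact: foldl_cat. Qed.

Lemma fireable_cat sg1 sg2 a :
  fireable (sg1 ++ sg2) a = fireable sg1 a && fireable sg2 (fire_seq sg1 a).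
Proof. by elim: sg1 a => [|t sg1 IH] a //=; rewrite IH andbA. Qed.

Lemma fireable_take i sg a : fireable sg a -> fireable (take i sg) a.
Proof. by rewrite -{1}(cat_take_drop i sg) fireable_cat => /andP []. Qed.

Lemma fireable_drop i sg a :
  fireable sg a -> fireable (drop i sg) (fire_seq (take i sg) a).
Proof. by rewrite -{1}(cat_take_drop i sg) fireable_cat => /andP []. Qed.

Lemma fireable_shorten (l : seq (conf P)) sg a :
  fireable sg a -> (forall i, i <= size sg -> fire_seq (take i sg) a \in l) ->
  exists2 sg', {subset sg' <= sg} &
    [/\ fireable sg' a, fire_seq sg' a = fire_seq sg a & size sg' < size l].
Proof.
have [n] := ubnP (size sg); elim: n sg => // n IH sg /ltnSE sz_sg ok_sg visit.
have [short|long] := ltnP (size sg) (size l); first by exists sg.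
have /(uniqPn a) [i [j [lt_ij]]] :
    ~~ uniq [seq fire_seq (take i sg) a | i <- iota 0 (size sg).+1].
  apply: contraL long => /uniq_leq_size le_trace; rewrite -ltnNge.
  have := le_trace l; rewrite size_map size_iota; apply.
  by move=> c /mapP [m]; rewrite mem_iota => /andP [_ m_le] ->; apply: visit.
rewrite size_map size_iota ltnS => le_j.
have le_i : i <= size sg by apply: leq_trans (ltnW lt_ij) le_j.
rewrite !(nth_map 0) ?size_iota ?ltnS // !nth_iota ?ltnS // !add0n => loop.
pose sg' := take i sg ++ drop j sg.
have sz_sg' : size sg' = i + (size sg - j) by rewrite size_cat size_drop size_takel.
have fire_sg' : fire_seq sg' a = fire_seq sg a.
  by rewrite fire_seq_cat loop -fire_seq_cat cat_take_drop.
have [|||sg'' sub_sg'' [ok'' fire'' sz'']] := IH sg'.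
- by rewrite sz_sg'; lia.
- by rewrite fireable_cat fireable_take // loop fireable_drop.
- move=> m; rewrite sz_sg' => le_m; rewrite take_cat size_takel //.
  case: (ltnP m i) => [lt_mi|le_im]; first by rewrite take_takel ?visit //; lia.
  by rewrite fire_seq_cat loop -fire_seq_cat -takeD visit //; lia.
exists sg''; last by rewrite fire'' fire_sg'.
by move=> t /sub_sg''; rewrite mem_cat => /orP [/mem_take|/mem_drop].
Qed.

Lemma word_in_subset N sg sg' : {subset sg' <= sg} -> word_in N sg -> word_in N sg'.
Proof. by move=> sub /allP w; apply/allP => t /sub /w. Qed.

Lemma word_in_cat N sg1 sg2 : word_in N (sg1 ++ sg2) = word_in N sg1 && word_in N sg2.
Proof. exact: all_cat. Qed.

Lemma word_in_take N i sg : word_in N sg -> word_in N (take i sg).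
Proof. by apply: word_in_subset => t /mem_take. Qed.

Lemma reach_refl N a : reach N a a.
Proof. by exists [::]. Qed.

Lemma reach_trans N a b c : reach N a b -> reach N b c -> reach N a c.
Proof.
move=> [sg1 [w1 r1]] [sg2 [w2 r2]]; exists (sg1 ++ sg2).
by rewrite word_in_cat w1 w2 run_cat; split=> //; exists b.
Qed.

Lemma reach_short N (l : seq (conf P)) a b :
  (forall z, reach N a z -> z \in l) -> reach N a b ->
  exists sg, [/\ word_in N sg, run sg a b & size sg < size l].
Proof.
move=> in_l [sg [w_sg /runE [ok_sg <-]]].
have visit i : i <= size sg -> fire_seq (take i sg) a \in l.
  by move=> _; apply: in_l; exists (take i sg); rewrite word_in_take // runE fireable_take.
have [sg' sub [ok' fire' sz']] := fireable_shorten ok_sg visit.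
by exists sg'; split; rewrite ?runE ?fire' ?(word_in_subset sub).
Qed.

Lemma reach_bottom N (l : seq (conf P)) a :
  (forall z, reach N a z -> z \in l) ->
  exists2 y, reach N a y & forall z, reach N y z -> reach N z y.
Proof.
pose reach_count b := count (fun z => `[< reach N b z >]) l.
have [n] := ubnP (reach_count a); elim: n a => // n IH a /ltnSE le_n in_l.
have [bot_a|/existsNP [z /not_implyP [az not_za]]] :=
  pselect (forall z, reach N a z -> reach N z a).
  by exists a; first exact: reach_refl.
have in_l' w : reach N z w -> w \in l by move=> zw; apply/in_l/(reach_trans az).
have [|y zy bot_y] := IH z _ in_l'; last by exists y => //; apply: reach_trans az zy.
apply: leq_trans le_n; apply: (@count_sub_lt _ _ _ _ a).
- by move=> w /asboolP zw; apply/asboolP/(reach_trans az).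
- exact/in_l/reach_refl.
- exact/asboolP/reach_refl.
- exact/asboolPn.
Qed.

Lemma bottom_component_card N (l : seq (conf P)) a y :
  (forall z, reach N a z -> z \in l) -> reach N a y ->
  (forall z, reach N y z -> reach N z y) ->
  exists2 n, n <= size l & bottom N y /\ component_card N y n.
Proof.
move=> in_l ay bot_y.
pose comp := [seq z <- undup l | `[< in_component N y z >]].
have card_comp : component_card N y (size comp).
  exists comp; split; first by rewrite filter_uniq ?undup_uniq.
  split=> // b; rewrite mem_filter mem_undup.
  split=> [/andP [/asboolP] //|yb].
  by rewrite asboolT // in_l //; apply: reach_trans ay yb.1.
exists (size comp); last by split=> //; split=> //; exists (size comp).
by rewrite size_filter (leq_trans (count_size _ _)) ?size_undup.
Qed.

End Firing.

Section Restriction.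
Variable P : finType.
Implicit Types (W : {set P}) (t : trans P) (a b : conf P) (sg : seq (trans P)) (T : net P).

Definition restr_trans W t : trans P := (restr W t.1, restr W t.2).

Lemma restr_restr W W' a : W' \subset W -> restr W' (restr W a) = restr W' a.
Proof. by move=> /subsetP sub; apply/ffunP => p; rewrite !ffunE; case: ifP => // /sub ->. Qed.

Lemma restr_setT a : restr setT a = a.
Proof. by apply/ffunP => p; rewrite ffunE in_setT. Qed.

Lemma map_restr_trans_setT sg : map (restr_trans setT) sg = sg.
Proof. by elim: sg => [|[t1 t2] sg IH] //=; rewrite IH /restr_trans !restr_setT. Qed.

Lemma word_in_restrT T W sg :
  word_in T sg -> word_in (restrT W T) (map (restr_trans W) sg).
Proof. by move=> /allP w; apply/allP => _ /mapP [t /w Tt ->]; apply: map_f. Qed.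

Lemma word_in_restrT_inv T W sw :
  word_in (restrT W T) sw -> exists2 sg, word_in T sg & sw = map (restr_trans W) sg.
Proof.
elim: sw => [|u sw IH] /=; first by exists [::].
case/andP => /mapP [t Tt ->] /IH [sg w_sg ->].
by exists (t :: sg); rewrite //= Tt.
Qed.

Lemma step_restr W W' t a b : W' \subset W ->
  step (restr_trans W t) a b -> step (restr_trans W' t) (restr W' a) (restr W' b).
Proof.
move=> /subsetP sub [g [-> ->]]; exists (restr W' g).
by split; apply/ffunP => p; rewrite !ffunE; case: ifP => // /sub ->.
Qed.

Lemma run_restr W W' sg a b : W' \subset W ->
  run (map (restr_trans W) sg) a b ->
  run (map (restr_trans W') sg) (restr W' a) (restr W' b).
Proof.
move=> sub; elim: sg a => [|t sg IH] a /=; first by move->.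
by case=> c [st r]; exists (restr W' c); split; [apply: step_restr st|apply: IH].
Qed.

Lemma run_restr_support W sg a b :
  run (map (restr_trans W) sg) a b -> restr W a = a -> restr W b = b.
Proof.
by move=> r aW; apply: (run_det _ r); rewrite -{1}aW; apply: run_restr (subxx W) r.
Qed.

Lemma pre_le_tnorm T t p : t \in T -> t.1 p <= tnorm T.
Proof.
move=> Tt; apply: leq_trans (leq_bigmax_seq _ Tt isT); rewrite leq_max.
by rewrite (@leq_bigmax _ (fun q => t.1 q) p).
Qed.

Lemma conf_le_cnorm (r : conf P) p : r p <= cnorm r.
Proof. exact: (@leq_bigmax _ (fun q => r q) p). Qed.

Lemma run_lift T W W' sg a b' : W' \subset W -> word_in T sg ->
  run (map (restr_trans W') sg) (restr W' a) b' ->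
  (forall p, p \in W :\: W' -> tnorm T * size sg <= a p) ->
  exists b, [/\ run (map (restr_trans W) sg) a b, restr W' b = b' &
    forall p, p \in W :\: W' -> a p <= b p + tnorm T * size sg].
Proof.
move=> sub; elim: sg a b' => [|t sg IH] a b' /=.
  by move=> _ <- _; exists a; split=> // p _; rewrite muln0 addn0.
case/andP => Tt w_sg [c' [st r]] rich.
have pre_t p : t.1 p <= tnorm T := pre_le_tnorm p Tt.
have en : enabled (restr_trans W t) a.
  apply/forallP => p; rewrite ffunE; case: ifP => // pW.
  case pW': (p \in W').
    by move: st => /stepE [/forallP /(_ p)]; rewrite !ffunE pW'.
  by have := rich p; rewrite inE pW pW' mulnS => /(_ isT); have := pre_t p; lia.
set c := fire (restr_trans W t) a.
have st_c : step (restr_trans W t) a c by apply/stepE.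
have c'E : c' = restr W' c by apply: step_det st (step_restr sub st_c).
have rich_c p : p \in W :\: W' -> tnorm T * size sg <= c p.
  move=> pWW'; have := rich p pWW'; move: pWW'; rewrite inE => /andP [_ pW].
  by rewrite /c !ffunE pW mulnS; have := pre_t p; lia.
have [|b [r_b b'E poor_b]] := IH c b' w_sg _ rich_c; first by rewrite -c'E.
exists b; split=> //; first by exists c.
move=> p pWW'; have := poor_b p pWW'; move: pWW'; rewrite inE => /andP [_ pW].
by rewrite /c !ffunE pW mulnS; have := pre_t p; lia.
Qed.

Lemma box_enum (Q W : {set P}) (C : seq (conf P)) (h : nat) :
  exists2 l : seq (conf P), size l = size C * h ^ #|W :\: Q| &
    forall z, restr W z = z -> restr Q z \in C ->
      (forall p, p \in W :\: Q -> z p < h) -> z \in l.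
Proof.
pose S := {p : P | p \in W :\: Q}.
pose glue (c : conf P) (f : {ffun S -> 'I_h}) : conf P :=
  [ffun p => if p \in Q then c p else
     if insub p is Some q then (f q : nat) else 0].
exists [seq glue c f | c <- C, f <- enum {ffun S -> 'I_h}].
  by rewrite size_allpairs -cardE card_ffun card_ord card_sig.
move=> z zW zQ small.
pose f : {ffun S -> 'I_h} := [ffun q => Ordinal (small _ (valP q))].
suff -> : z = glue (restr Q z) f by apply: allpairs_f => //; apply: mem_enum.
apply/ffunP => p; rewrite !ffunE; case pQ: (p \in Q) => //.
case: insubP => [q _ <-|]; first by rewrite ffunE.
by rewrite !inE pQ /= => /negbTE pW; rewrite -zW ffunE pW.
Qed.

End Restriction.

Lemma proper_setD_card (P : finType) (Q W : {set P}) :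
  Q \subset W -> 0 < #|W :\: Q| -> Q \proper W.
Proof.
move=> QW; rewrite properE QW card_gt0; apply: contraNN => WQ.
by rewrite setD_eq0.
Qed.

Section Rackoff.
Variables (P : finType) (T : net P) (rho : conf P) (Q : {set P}) (C : seq (conf P)).
Hypothesis memC : forall c, c \in C <-> in_component (restrT Q T) (restr Q rho) c.
Hypothesis bottom_rho :
  forall b, reach (restrT Q T) (restr Q rho) b -> reach (restrT Q T) b (restr Q rho).

Implicit Types (W : {set P}) (sg : seq (trans P)) (x y z : conf P).

Local Notation s := (size C).
Local Notation tau := (tnorm T).
(* Enough tokens on a place outside Q to follow any run of length < s back to
   rho|Q inside its component and still exceed rho there. *)
Local Notation X := (1 + s * tau + cnorm rho).
Local Notation bound k := (k * s * X ^ (k ^ k)).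

Lemma component_reach_closed c c' : c \in C -> reach (restrT Q T) c c' -> c' \in C.
Proof.
move=> /memC [rho_c c_rho] c_c'; apply/memC.
by have rho_c' := reach_trans rho_c c_c'; split=> //; apply: bottom_rho.
Qed.

Lemma run_restr_component W sg x y : Q \subset W -> restr Q x \in C -> word_in T sg ->
  run (map (restr_trans W) sg) (restr W x) y -> restr Q y \in C.
Proof.
move=> QW xC w r; apply: component_reach_closed xC _.
exists (map (restr_trans Q) sg); split; first exact: word_in_restrT.
by rewrite -(restr_restr x QW); apply: run_restr r.
Qed.

Lemma reach_restr_box W x h : Q \subset W -> restr Q x \in C ->
  exists2 l : seq (conf P), size l = s * h ^ #|W :\: Q| &
    forall z, reach (restrT W T) (restr W x) z ->
      (forall p, p \in W :\: Q -> z p < h) -> z \in l.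
Proof.
move=> QW xC; have [l sz_l in_l] := box_enum Q W C h.
exists l => // z [_ [/word_in_restrT_inv [sg w ->] r]].
apply: in_l; last exact: run_restr_component xC w r.
by apply: run_restr_support r _; rewrite restr_restr.
Qed.

Lemma no_escape_bottom W x h : Q \subset W -> restr Q x \in C ->
  (forall z, reach (restrT W T) (restr W x) z -> forall p, p \in W :\: Q -> z p < h) ->
  exists sg y, [/\ word_in T sg, run (map (restr_trans W) sg) (restr W x) y,
    size sg < s * h ^ #|W :\: Q| &
    exists2 n, n <= s * h ^ #|W :\: Q| &
      bottom (restrT W T) y /\ component_card (restrT W T) y n].
Proof.
move=> QW xC small; have [l sz_l in_l] := reach_restr_box h QW xC.
have reach_l z : reach (restrT W T) (restr W x) z -> z \in l.
  by move=> xz; apply: in_l xz (small z xz).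
have [y xy bot_y] := reach_bottom reach_l.
have [n le_n bot_card] := bottom_component_card reach_l xy bot_y.
have [_ [/word_in_restrT_inv [sg w ->] r sz]] := reach_short reach_l xy.
by exists sg, y; rewrite -sz_l size_map in sz *; split=> //; exists n.
Qed.

Lemma short_escape W x h z p : Q \subset W -> restr Q x \in C ->
  reach (restrT W T) (restr W x) z -> p \in W :\: Q -> h <= z p ->
  exists sg z0 p0, [/\ word_in T sg, run (map (restr_trans W) sg) (restr W x) z0,
    size sg <= s * h ^ #|W :\: Q|, p0 \in W :\: Q & h <= z0 p0].
Proof.
move=> QW xC [sw [w_sw /runE [ok_sw <-]]] pWQ hz.
set a := restr W x; pose escaped (c : conf P) := [exists q in W :\: Q, h <= c q].
have esc_end : exists i, (i <= size sw) && escaped (fire_seq (take i sw) a).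
  by exists (size sw); rewrite leqnn take_size; apply/existsP; exists p; rewrite pWQ.
case: (ex_minnP esc_end) => i0 /andP [le_i0 esc_i0] min_i0.
have [l sz_l in_l] := reach_restr_box h QW xC.
set z0 := fire_seq (take i0 sw) a.
have visit j : j <= size (take i0 sw) -> fire_seq (take j (take i0 sw)) a \in z0 :: l.
  rewrite size_takel // => le_j; rewrite take_takel // inE.
  have [lt_j|ge_j] := ltnP j i0; last by rewrite [j](@anti_leq _ i0) ?le_j ?eqxx.
  have not_esc : ~~ escaped (fire_seq (take j sw) a).
    apply/negP => esc; have := min_i0 j; rewrite esc andbT.
    by rewrite (leq_trans (ltnW lt_j) le_i0) leqNgt lt_j => /(_ isT).
  apply/orP; right; apply: in_l.
    exists (take j sw); rewrite word_in_take // runE fireable_take //.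
  move=> q qWQ; rewrite ltnNge; apply: contra not_esc => hq.
  by apply/existsP; exists q; rewrite qWQ.
have [sw' sub [ok' fire' sz']] := fireable_shorten (fireable_take i0 ok_sw) visit.
have [sg w sw'E] := word_in_restrT_inv (word_in_subset sub (word_in_take i0 w_sw)).
rewrite {sw' sub}sw'E in ok' fire' sz'.
move: esc_i0 => /existsP [p0 /andP [p0WQ hp0]].
exists sg, z0, p0; split=> //; first by rewrite runE fire'.
by rewrite -sz_l -ltnS -(size_map (restr_trans W)).
Qed.

Definition cover_or_bottom (W : {set P}) (k : nat) (y : conf P) : Prop :=
  (forall p, p \in W :\: Q -> X <= y p) \/
  exists (R : {set P}) (n : nat), [/\ Q \proper R, R \subset W, bottom (restrT R T) (restr R y),
    component_card (restrT R T) (restr R y) n & n <= bound k].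

Lemma cover_or_bottom_lift W k p z0 sg y' :
  p \in W :\: Q -> word_in T sg -> size sg <= bound k -> X + tau * bound k <= z0 p ->
  run (map (restr_trans (W :\ p)) sg) (restr (W :\ p) z0) y' ->
  cover_or_bottom (W :\ p) k y' ->
  exists2 y, run (map (restr_trans W) sg) z0 y & cover_or_bottom W k.+1 y.
Proof.
move=> pWQ w sz rich r cob; have [pW _] := setDP pWQ.
have sub : W :\ p \subset W := subD1set W p.
have few : tau * size sg <= tau * bound k by rewrite leq_mul2l sz orbT.
have p_out q : q \in W :\: (W :\ p) -> q = p.
  by rewrite !inE => /andP [/nandP [/negbNE /eqP|/negP] //].
have [|y [r_y y'E poor]] := run_lift sub w r.
  by move=> q /p_out ->; apply: leq_trans rich; apply: leq_trans few (leq_addl _ _).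
exists y => //; case: cob => [cover|[R [n [QR RWp botR cardR le_n]]]].
- left; move=> q /setDP [qW qQ]; have [->|qp] := eqVneq q p.
    have := poor p; rewrite !inE eqxx pW => /(_ isT).
    by move: rich few; lia.
  have qWp : q \in W :\ p by rewrite !inE qp qW.
  by have := cover q; rewrite -y'E ffunE qWp; apply; rewrite inE qWp qQ.
- right; exists R, n; rewrite -(restr_restr y RWp) y'E; split=> //.
    exact: subset_trans RWp sub.
  apply: leq_trans le_n (leq_trans (leq_addl _ _) (rackoff_bound_step _ _ _)).
  by rewrite addn_gt0.
Qed.

Lemma cover_or_bottom_run k W x : Q \subset W -> #|W :\: Q| = k -> restr Q x \in C ->
  exists sg y, [/\ word_in T sg, size sg <= bound k,
    run (map (restr_trans W) sg) (restr W x) y & cover_or_bottom W k y].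
Proof.
elim: k W x => [|k IH] W x QW card_WQ xC.
  exists [::], (restr W x); split=> //; left; move=> p.
  by move/eqP: card_WQ; rewrite cards_eq0 => /eqP ->; rewrite inE.
set h := X ^ (k.+1 ^ k).
have X_gt0 : 0 < X by rewrite addn_gt0.
have box_le : s * h ^ #|W :\: Q| + bound k <= bound k.+1.
  by rewrite card_WQ -expnM -expnSr rackoff_bound_step.
have [[z [p [xz pWQ hz]]]|no_escape] :=
  pselect (exists z p, [/\ reach (restrT W T) (restr W x) z, p \in W :\: Q & h <= z p]).
- have [sg1 [z0 [p0 [w1 r1 sz1 p0WQ hp0]]]] := short_escape QW xC xz pWQ hz.
  have [_ p0Q] := setDP p0WQ.
  have QWp : Q \subset W :\ p0 by rewrite subsetD1 QW p0Q.
  have card' : #|(W :\ p0) :\: Q| = k.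
    by move: card_WQ; rewrite (cardsD1 p0) p0WQ setDDl setUC -setDDl => -[].
  have z0C := run_restr_component QW xC w1 r1.
  have [sg2 [y' [w2 sz2 r2 cob]]] := IH (W :\ p0) z0 QWp card' z0C.
  have rich : X + tau * bound k <= z0 p0.
    have -> : tau * bound k = k * (s * tau) * X ^ (k ^ k) by lia.
    by apply: leq_trans hp0; apply: rackoff_growth; rewrite leq_addr.
  have [y r_y cob_y] := cover_or_bottom_lift p0WQ w2 sz2 rich r2 cob.
  exists (sg1 ++ sg2), y; split=> //; first by rewrite word_in_cat w1.
    by rewrite size_cat; apply: leq_trans box_le; apply: leq_add.
  by rewrite map_cat run_cat; exists z0.
- have small z : reach (restrT W T) (restr W x) z -> forall p, p \in W :\: Q -> z p < h.
    by move=> xz p pWQ; rewrite ltnNge; apply/negP => hz; apply: no_escape; exists z, p.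
  have [sg [y [w r sz [n le_n [bot card]]]]] := no_escape_bottom QW xC small.
  have yW : restr W y = y by apply: run_restr_support r _; rewrite restr_restr.
  exists sg, y; split=> //; first exact: leq_trans (ltnW sz) (leq_trans (leq_addr _ _) box_le).
  right; exists W, n; rewrite yW; split=> //.
    by apply: proper_setD_card; rewrite ?card_WQ.
  exact: leq_trans le_n (leq_trans (leq_addr _ _) box_le).
Qed.

Lemma return_to_base y : restr Q y \in C -> (forall p, p \in setT :\: Q -> X <= y p) ->
  exists sg y', [/\ word_in T sg, size sg < s, run sg y y', restr Q y' = restr Q rho &
    forall p, p \notin Q -> rho p < y' p].
Proof.
move=> yC cover; have [_ y_rho] := (memC _).1 yC.
have in_C z : reach (restrT Q T) (restr Q y) z -> z \in C := component_reach_closed yC.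
have [_ [/word_in_restrT_inv [sg w ->] r sz]] := reach_short in_C y_rho.
rewrite size_map in sz.
have few : tau * size sg <= s * tau by rewrite mulnC leq_mul2r ltnW ?orbT.
have [|y' [r' y'Q poor]] := run_lift (subsetT Q) w r.
  by move=> p /cover; apply: leq_trans; apply: leq_trans few _; lia.
rewrite map_restr_trans_setT in r'; exists sg, y'; split=> // p pQ.
have pTQ : p \in setT :\: Q by rewrite inE pQ in_setT.
by have := poor p pTQ; have := cover p pTQ; have := conf_le_cnorm rho p; lia.
Qed.

End Rackoff.

Theorem lemma6p2 (P : finType) (T : net P) (rho : conf P) (Q : {set P}) (s : nat) :
  bottom (restrT Q T) (restr Q rho) ->
  component_card (restrT Q T) (restr Q rho) s ->
  let d := #|~: Q| in
  let B := (1 + d * (1 + s * tnorm T + cnorm rho) ^ (d ^ d)) * s in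
  exists (sigma : seq (trans P)) (rho' : conf P),
    word_in T sigma /\ size sigma <= B /\ run sigma rho rho' /\
    ( (restr Q rho' = restr Q rho /\ (forall p, p \notin Q -> rho p < rho' p))
      \/
      (exists (Q' : {set P}) (s' : nat), Q \proper Q' /\
         bottom (restrT Q' T) (restr Q' rho') /\
         component_card (restrT Q' T) (restr Q' rho') s' /\ s' <= B) ).
Proof.
move=> [_ bot_rho] [C [_ [<- memC]]] d B.
have rhoC : restr Q rho \in C by apply/memC; split; apply: reach_refl.
have card_d : #|setT :\: Q| = d by rewrite setTD.
have [sg [y [w sz r cob]]] := cover_or_bottom_run memC bot_rho (subsetT Q) card_d rhoC.
have le_B : d * size C * (1 + size C * tnorm T + cnorm rho) ^ (d ^ d) <= B.
  by rewrite /B mulnDl mul1n mulnAC leq_addl.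
have yC := run_restr_component memC bot_rho (subsetT Q) rhoC w r.
rewrite map_restr_trans_setT restr_setT in r.
case: cob => [cover|[R [n [QR _ botR cardR le_n]]]].
- have [sg' [y' [w' sz' r' y'Q grow]]] := return_to_base memC bot_rho yC cover.
  exists (sg ++ sg'), y'; split; first by rewrite word_in_cat w.
  split; first by rewrite size_cat /B mulnDl mul1n addnC mulnAC leq_add // ltnW.
  by split; [rewrite run_cat; exists y | left].
- exists sg, y; split=> //; split; first exact: leq_trans sz le_B.
  by split=> //; right; exists R, n; do 3!split=> //; apply: leq_trans le_n le_B.
Qed.
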